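(* Let $(A,B)$ be a finite-dimensional odd-symmetric associative superalgebra over an algebraically closed field $\mathbb{K}$ of characteristic zero such that $A_{\bar 0}$ is a semi-simple $A_{\bar 0}$-bimodule. Then $$A=S_1\oplus\cdots\oplus S_n\oplus N\oplus \hat S_1\oplus\cdots\oplus\hat S_n\oplus\hat N,$$ where each $S_i$ is a simple two-sided ideal of $A_{\bar 0}$, $N=\mathrm{Ann}(A_{\bar 0})$, each $\hat S_i$ is an irreducible $A_{\bar 0}$-sub-bimodule of $A_{\bar 1}$, and $\hat N$ is an $A_{\bar 0}$-sub-bimodule of $A_{\bar 1}$ with $A_{\bar 0}\hat N=\{0\}=\hat N A_{\bar 0}$, with $A_{\bar 0}=S_1\oplus\cdots\oplus S_n\oplus N$ and $A_{\bar 1}=\hat S_1\oplus\cdots\oplus\hat S_n\oplus\hat N$. Moreover: (i) $\hat S_i\hat S_j=\{0\}=\hat S_j\hat S_i$ for $i\neq j$; (ii) $\hat S_i\hat S_i\in\{\{0\},S_i\}$ for all $i$; (iii) $\hat N\hat S_i=\{0\}=\hat S_i\hat N$ for all $i$; (iv) $\hat N\hat N\subseteq N$.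
   Context: A superalgebra is $\mathbb{Z}_2$-graded, $A=A_{\bar 0}\oplus A_{\bar 1}$, $A_\alpha A_\beta\subseteq A_{\alpha+\beta}$. An odd-symmetric structure on $A$ is a bilinear form $B$ with $B(A_{\bar 0},A_{\bar 0})=B(A_{\bar 1},A_{\bar 1})=0$ which is supersymmetric ($B(x,y)=(-1)^{|x||y|}B(y,x)$), associative ($B(xy,z)=B(x,yz)$) and non-degenerate. $A_{\bar 0}$ and $A_{\bar 1}$ are $A_{\bar 0}$-bimodules via left and right multiplication; a bimodule is semi-simple if every sub-bimodule has a complementary sub-bimodule, and irreducible if it is non-zero with no sub-bimodules other than $\{0\}$ and itself. $\mathrm{Ann}(A_{\bar 0})=\{x\in A_{\bar 0}: xA_{\bar 0}=A_{\bar 0}x=\{0\}\}$. *)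

(* finite-dimensional (non-unital) associative superalgebras
   over a field, modelled as a vectType A over F with a bilinear product. *)
From HB Require Import structures.
From mathcomp Require Import all_boot all_order all_algebra.
Set Implicit Arguments. Unset Strict Implicit. Unset Printing Implicit Defensive.
Import GRing.Theory.
Local Open Scope ring_scope.

Section Defs.
Variables (F : fieldType) (A : vectType F).

Definition bilinear_mul (mul : A -> A -> A) : Prop :=
  (forall (a : F) x y z, mul (a *: x + y) z = a *: mul x z + mul y z) /\
  (forall (a : F) x y z, mul z (a *: x + y) = a *: mul z x + mul z y).

Definition assoc_mul (mul : A -> A -> A) : Prop :=
  forall x y z, mul (mul x y) z = mul x (mul y z).

Definition superalgebra (A0 A1 : {vspace A}) (mul : A -> A -> A) : Prop :=
  [/\ bilinear_mul mul, assoc_mul mul,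
      (A0 + A1)%VS = fullv, directv (A0 + A1) &
      [/\ forall x y, x \in A0 -> y \in A0 -> mul x y \in A0,
          forall x y, x \in A0 -> y \in A1 -> mul x y \in A1,
          forall x y, x \in A1 -> y \in A0 -> mul x y \in A1 &
          forall x y, x \in A1 -> y \in A1 -> mul x y \in A0]].

(* the subspace U V spanned by all products u v, u in U, v in V *)
Definition mprodv (mul : A -> A -> A) (U V : {vspace A}) : {vspace A} :=
  (\sum_(i < \dim U) \sum_(j < \dim V) <[mul (vbasis U)`_i (vbasis V)`_j]>)%VS.

Definition odd_symmetric (A0 A1 : {vspace A}) (mul : A -> A -> A)
    (B : A -> A -> F) : Prop :=
  [/\ (forall (a : F) x y z, B (a *: x + y) z = a * B x z + B y z),
      (forall (a : F) x y z, B z (a *: x + y) = a * B z x + B z y),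
      (forall x y, x \in A0 -> y \in A0 -> B x y = 0) /\
      (forall x y, x \in A1 -> y \in A1 -> B x y = 0),
      (* supersymmetry B(x,y) = (-1)^{|x||y|} B(y,x) for homogeneous x, y *)
      [/\ forall x y, x \in A0 -> y \in A0 -> B x y = B y x,
          forall x y, x \in A0 -> y \in A1 -> B x y = B y x,
          forall x y, x \in A1 -> y \in A0 -> B x y = B y x &
          forall x y, x \in A1 -> y \in A1 -> B x y = - B y x] &
      (forall x y z, B (mul x y) z = B x (mul y z)) /\
      (forall x, (forall y, B x y = 0) -> x = 0)].

Definition sub_bimodule (A0 : {vspace A}) (mul : A -> A -> A)
    (M U : {vspace A}) : Prop :=
  [/\ (U <= M)%VS, (mprodv mul A0 U <= U)%VS & (mprodv mul U A0 <= U)%VS].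

Definition semisimple_bimodule (A0 : {vspace A}) (mul : A -> A -> A)
    (M : {vspace A}) : Prop :=
  forall U, sub_bimodule A0 mul M U ->
    exists W, [/\ sub_bimodule A0 mul M W, (U + W)%VS = M & (U :&: W)%VS = 0%VS].

Definition irreducible_bimodule (A0 : {vspace A}) (mul : A -> A -> A)
    (M U : {vspace A}) : Prop :=
  [/\ sub_bimodule A0 mul M U, U != 0%VS &
      forall V, sub_bimodule A0 mul U V -> V = 0%VS \/ V = U].

Definition ideal_of (mul : A -> A -> A) (A0 I : {vspace A}) : Prop :=
  sub_bimodule A0 mul A0 I.

Definition simple_alg (mul : A -> A -> A) (S : {vspace A}) : Prop :=
  mprodv mul S S != 0%VS /\
  forall I, ideal_of mul S I -> I = 0%VS \/ I = S.

Definition is_Ann (mul : A -> A -> A) (A0 N : {vspace A}) : Prop :=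
  forall x, x \in N <->
    (x \in A0 /\ forall a, a \in A0 -> mul x a = 0 /\ mul a x = 0).

End Defs.

(* The form B pairs A0 and A1 nondegenerately, so dim A0 = dim A1 and the
   B-orthogonal [orth1 U] in A1 of a subspace U of A0 has dimension
   dim A1 - dim U; when U is an ideal of A0, [orth1 U] is a sub-bimodule of A1
   annihilated on both sides by U.  Ann(A0) is the B-orthogonal in A0 of
   A0 A1 + A1 A0, and semisimplicity splits A0 = S_1 + ... + S_n + Ann(A0)
   with minimal ideals S_i, each simple with S_i S_i = S_i.  Take
   Sh_i := orth1 (sum_(j != i) S_j + Ann(A0)) and Nh := orth1 (sum_i S_i).
   Then S_j kills Sh_i for j != i, irreducibility gives
   Sh_i = S_i Sh_i = Sh_i S_i, and the product relations follow by
   associativity: Sh_i Sh_j = Sh_i S_i Sh_j = 0 for i != j, while Sh_i Sh_i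
   is an ideal of A0 contained in S_i. *)

From HB Require Import structures.
From mathcomp Require Import all_boot all_order all_algebra all_field.
From Stdlib Require Import Classical.
From mathcomp Require Import zify.
Set Implicit Arguments. Unset Strict Implicit. Unset Printing Implicit Defensive.
Import GRing.Theory.
Local Open Scope ring_scope.

Section LinearClosure.
Variables (F : fieldType) (A : vectType F) (P : A -> Prop).
Hypotheses (P0 : P 0) (P_lin : forall a x y, P x -> P y -> P (a *: x + y)).

Lemma sum_lin_closed (I : finType) (Q : pred I) (f : I -> A) :
  (forall i, Q i -> P (f i)) -> P (\sum_(i | Q i) f i).
Proof.
move=> Pf; elim/big_rec: _ => // i x Qi Px.
by have := P_lin 1 (Pf i Qi) Px; rewrite scale1r.
Qed.

Lemma vspace_lin_closed (U : {vspace A}) :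
  (forall i : 'I_(\dim U), P (vbasis U)`_i) -> forall u, u \in U -> P u.
Proof.
move=> Pb u /coord_vbasis ->; apply: sum_lin_closed => i _.
by have := P_lin (coord (vbasis U) i u) (Pb i) P0; rewrite addr0.
Qed.

End LinearClosure.

Section BilinearProduct.
Variables (F : fieldType) (A : vectType F) (mul : A -> A -> A).
Hypothesis mul_bilinear : bilinear_mul mul.

Lemma mulmDl x y z : mul (x + y) z = mul x z + mul y z.
Proof. by have := mul_bilinear.1 1 x y z; rewrite !scale1r. Qed.

Lemma mulmDr x y z : mul z (x + y) = mul z x + mul z y.
Proof. by have := mul_bilinear.2 1 x y z; rewrite !scale1r. Qed.

Lemma mul0m z : mul 0 z = 0.
Proof. by apply: (addrI (mul 0 z)); rewrite -mulmDl !addr0. Qed.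

Lemma mulm0 z : mul z 0 = 0.
Proof. by apply: (addrI (mul z 0)); rewrite -mulmDr !addr0. Qed.

Lemma mulm_suml (I : Type) (r : seq I) (P : pred I) (f : I -> A) z :
  mul (\sum_(i <- r | P i) f i) z = \sum_(i <- r | P i) mul (f i) z.
Proof. exact: (big_morph (mul^~ z) (fun x y => mulmDl x y z) (mul0m z)). Qed.

Lemma mulm_sumr (I : Type) (r : seq I) (P : pred I) (f : I -> A) z :
  mul z (\sum_(i <- r | P i) f i) = \sum_(i <- r | P i) mul z (f i).
Proof. exact: (big_morph (mul z) (fun x y => mulmDr x y z) (mulm0 z)). Qed.

Lemma mprodv_ind (P : A -> Prop) (U V : {vspace A}) :
  P 0 -> (forall a x y, P x -> P y -> P (a *: x + y)) ->
  (forall u v, u \in U -> v \in V -> P (mul u v)) ->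
  forall x, x \in mprodv mul U V -> P x.
Proof.
move=> P0 P_lin Pmul x /memv_sumP[vs Hvs ->]; apply: sum_lin_closed => // i _.
have /memv_sumP[ws Hws ->] := Hvs i isT; apply: sum_lin_closed => // j _.
have /vlineP[k ->] := Hws j isT; rewrite -[_ *: _]addr0; apply: P_lin => //.
by apply: Pmul; apply/vbasis_mem/mem_nth; rewrite size_tuple.
Qed.

Lemma mprodv_subv (U V T : {vspace A}) :
  (forall u v, u \in U -> v \in V -> mul u v \in T) -> (mprodv mul U V <= T)%VS.
Proof.
move=> UVT; apply/subvP; apply: mprodv_ind => //; first exact: mem0v.
by move=> a x y Tx Ty; rewrite memvD ?memvZ.
Qed.

Lemma memv_mprodv (U V : {vspace A}) u v :
  u \in U -> v \in V -> mul u v \in mprodv mul U V.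
Proof.
move: u; apply: vspace_lin_closed => [|a x y Hx Hy Vv|i].
- by rewrite mul0m mem0v.
- by rewrite mul_bilinear.1 memvD ?memvZ ?Hx ?Hy.
move: v; apply: vspace_lin_closed => [|a x y Hx Hy|j].
- by rewrite mulm0 mem0v.
- by rewrite mul_bilinear.2 memvD ?memvZ.
apply: (subvP (sumv_sup i isT (subvv _))).
exact: (subvP (sumv_sup j isT (subvv _)) _ (memv_line _)).
Qed.

Lemma mprodvS (U V U' V' : {vspace A}) :
  (U <= U')%VS -> (V <= V')%VS -> (mprodv mul U V <= mprodv mul U' V')%VS.
Proof.
move=> /subvP sUU' /subvP sVV'; apply: mprodv_subv => u v Uu Vv.
by apply: memv_mprodv; [apply: sUU' | apply: sVV'].
Qed.

Lemma mprodvDl (U V W : {vspace A}) :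
  (mprodv mul (U + V) W <= mprodv mul U W + mprodv mul V W)%VS.
Proof.
apply: mprodv_subv => x w /memv_addP[u Uu [v Vv ->]] Ww.
by rewrite mulmDl memv_add ?memv_mprodv.
Qed.

Lemma mprodvDr (U V W : {vspace A}) :
  (mprodv mul W (U + V) <= mprodv mul W U + mprodv mul W V)%VS.
Proof.
apply: mprodv_subv => w x Ww /memv_addP[u Uu [v Vv ->]].
by rewrite mulmDr memv_add ?memv_mprodv.
Qed.

Lemma mprodv_eq0 (U V : {vspace A}) :
  mprodv mul U V = 0%VS <-> (forall u v, u \in U -> v \in V -> mul u v = 0).
Proof.
split=> [UV0 u v Uu Vv | UV0].
  by apply/eqP; rewrite -memv0 -UV0 memv_mprodv.
apply/eqP; rewrite -subv0; apply: mprodv_subv => u v Uu Vv.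
by rewrite UV0 ?mem0v.
Qed.

Lemma mprodv0 (U : {vspace A}) : mprodv mul U 0 = 0%VS.
Proof. by apply/mprodv_eq0 => u v _; rewrite memv0 => /eqP ->; apply: mulm0. Qed.

Lemma mprod0v (U : {vspace A}) : mprodv mul 0 U = 0%VS.
Proof. by apply/mprodv_eq0 => u v; rewrite memv0 => /eqP -> _; apply: mul0m. Qed.

Hypothesis mul_assoc : assoc_mul mul.

Lemma mprodvA (U V W : {vspace A}) :
  mprodv mul (mprodv mul U V) W = mprodv mul U (mprodv mul V W).
Proof.
apply/eqP; rewrite eqEsubv; apply/andP; split.
  apply: mprodv_subv => x w UVx Ww; move: x UVx; apply: mprodv_ind.
  - by rewrite mul0m mem0v.
  - by move=> a x y Hx Hy; rewrite mul_bilinear.1 memvD ?memvZ.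
  by move=> u v Uu Vv; rewrite mul_assoc !memv_mprodv.
apply: mprodv_subv => u x Uu VWx; move: x VWx; apply: mprodv_ind.
- by rewrite mulm0 mem0v.
- by move=> a x y Hx Hy; rewrite mul_bilinear.2 memvD ?memvZ.
by move=> v w Vv Ww; rewrite -mul_assoc !memv_mprodv.
Qed.

End BilinearProduct.

Section OrthogonalSpace.
Variables (F : fieldType) (A : vectType F) (B : A -> A -> F).
Hypothesis formZDl : forall (a : F) x y z, B (a *: x + y) z = a * B x z + B y z.
Hypothesis formZDr : forall (a : F) x y z, B z (a *: x + y) = a * B z x + B z y.

Lemma formDl x y z : B (x + y) z = B x z + B y z.
Proof. by have := formZDl 1 x y z; rewrite scale1r mul1r. Qed.

Lemma formDr x y z : B z (x + y) = B z x + B z y.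
Proof. by have := formZDr 1 x y z; rewrite scale1r mul1r. Qed.

Lemma form0l z : B 0 z = 0.
Proof. by apply: (addrI (B 0 z)); rewrite -formDl !addr0. Qed.

Lemma form0r z : B z 0 = 0.
Proof. by apply: (addrI (B z 0)); rewrite -formDr !addr0. Qed.

Definition pairing_row (U : {vspace A}) (z : A) : 'rV[F]_(\dim U) :=
  \row_k B (vbasis U)`_k z.

Fact pairing_row_is_linear U : linear (pairing_row U).
Proof. by move=> a u v; apply/rowP => k; rewrite !mxE formZDr. Qed.

(* The vectors of [T] that are [B]-orthogonal to [U], on the right. *)
Definition orthv (T U : {vspace A}) : {vspace A} :=
  (T :&: lker (linfun (pairing_row U)))%VS.

Lemma memv_orthv T U z :
  z \in orthv T U <-> z \in T /\ (forall u, u \in U -> B u z = 0).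
Proof.
have linU := pairing_row_is_linear U.
rewrite memv_cap memv_ker (lfunE (HB.pack (pairing_row U)
  (GRing.isLinear.Build _ _ _ _ _ linU))) /=.
split=> [/andP[-> /eqP Uz0] | [-> Uz0]].
  split=> //; apply: vspace_lin_closed => [|a x y Hx Hy|i]; first exact: form0l.
    by rewrite formZDl Hx Hy mulr0 addr0.
  by have := congr1 (fun r : 'rV[F]_(\dim U) => r 0 i) Uz0; rewrite !mxE.
apply/eqP/rowP => k; rewrite !mxE Uz0 //.
by apply/vbasis_mem/mem_nth; rewrite size_tuple.
Qed.

Lemma orthv_subv T U : (orthv T U <= T)%VS.
Proof. exact: capvSl. Qed.

Lemma dim_orthv_geq T U : (\dim T <= \dim (orthv T U) + \dim U)%N.
Proof.
have := limg_ker_dim (linfun (pairing_row U)) T.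
have := dimvS (subvf (linfun (pairing_row U) @: T)).
by rewrite dimvf /dim /= mul1n /orthv; lia.
Qed.

Section Pairing.
Variables P Q : {vspace A}.
Hypothesis PQ_full : (P + Q)%VS = fullv.
Hypothesis formPP : forall x y, x \in P -> y \in P -> B x y = 0.
Hypothesis formQQ : forall x y, x \in Q -> y \in Q -> B x y = 0.
Hypothesis form_symPQ : forall x y, x \in P -> y \in Q -> B x y = B y x.
Hypothesis form_nondeg : forall x, (forall y, B x y = 0) -> x = 0.

Lemma form_nondegQ z : z \in Q -> (forall u, u \in P -> B u z = 0) -> z = 0.
Proof.
move=> Qz Pz0; apply: form_nondeg => y.
have /memv_addP[p Pp [q Qq ->]] : y \in (P + Q)%VS by rewrite PQ_full memvf.
by rewrite formDr -form_symPQ // Pz0 // formQQ // addr0.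
Qed.

Lemma orthv_full_eq0 : orthv Q P = 0%VS.
Proof.
apply/eqP; rewrite -subv0; apply/subvP => z /memv_orthv[Qz Pz0].
by rewrite (form_nondegQ Qz Pz0) mem0v.
Qed.

Lemma dim_pairing_leq : (\dim Q <= \dim P)%N.
Proof. by have := dim_orthv_geq Q P; rewrite orthv_full_eq0 dimv0. Qed.

(* The orthogonal spaces of [U] and of a complement [W] of [U] in [P] meet
   trivially, which turns the inequality [dim_orthv_geq] into an equality. *)
Lemma dim_orthv U : (\dim P <= \dim Q)%N -> (U <= P)%VS ->
  (\dim (orthv Q U) + \dim U)%N = \dim Q.
Proof.
move=> lePQ sUP; set W := (P :\: U)%VS.
have dimUW := dimv_cap_compl P U; rewrite (capv_idPr sUP) -/W in dimUW.
have orthUW : (orthv Q U :&: orthv Q W = 0)%VS.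
  apply/eqP; rewrite -subv0 -orthv_full_eq0.
  apply/subvP => z /memv_capP[/memv_orthv[Qz Uz0] /memv_orthv[_ Wz0]].
  apply/memv_orthv; split=> // p; rewrite -(addv_diff_cap P U) (capv_idPr sUP).
  by case/memv_addP=> [w Ww [u Uu ->]]; rewrite formDl Wz0 // Uz0 // addr0.
have := dimv_sum_cap (orthv Q U) (orthv Q W); rewrite orthUW dimv0.
have : (\dim (orthv Q U + orthv Q W) <= \dim Q)%N.
  by apply: dimvS; rewrite subv_add !orthv_subv.
have := dim_orthv_geq Q U; have := dim_orthv_geq Q W; lia.
Qed.

End Pairing.

End OrthogonalSpace.

Section OddSymmetricSuperalgebra.
Variables (F : fieldType) (A : vectType F) (A0 A1 : {vspace A}).
Variables (mul : A -> A -> A) (B : A -> A -> F).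
Hypothesis superA : superalgebra A0 A1 mul.
Hypothesis oddsymB : odd_symmetric A0 A1 mul B.

Let mul_bil : bilinear_mul mul. Proof. by case: superA. Qed.
Let mulA : assoc_mul mul. Proof. by case: superA. Qed.
Let A01_full : (A0 + A1)%VS = fullv. Proof. by case: superA. Qed.
Let A10_full : (A1 + A0)%VS = fullv. Proof. by rewrite addvC A01_full. Qed.
Let mul00 x y : x \in A0 -> y \in A0 -> mul x y \in A0.
Proof. by case: superA => _ _ _ _ [H _ _ _]; apply: H. Qed.
Let mul01 x y : x \in A0 -> y \in A1 -> mul x y \in A1.
Proof. by case: superA => _ _ _ _ [_ H _ _]; apply: H. Qed.
Let mul10 x y : x \in A1 -> y \in A0 -> mul x y \in A1.
Proof. by case: superA => _ _ _ _ [_ _ H _]; apply: H. Qed.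
Let mul11 x y : x \in A1 -> y \in A1 -> mul x y \in A0.
Proof. by case: superA => _ _ _ _ [_ _ _ H]; apply: H. Qed.
Let formZDl : forall (a : F) x y z, B (a *: x + y) z = a * B x z + B y z.
Proof. by case: oddsymB. Qed.
Let formZDr : forall (a : F) x y z, B z (a *: x + y) = a * B z x + B z y.
Proof. by case: oddsymB. Qed.
Let form00 x y : x \in A0 -> y \in A0 -> B x y = 0.
Proof. by case: oddsymB => _ _ [H _] _ _; apply: H. Qed.
Let form11 x y : x \in A1 -> y \in A1 -> B x y = 0.
Proof. by case: oddsymB => _ _ [_ H] _ _; apply: H. Qed.
Let form_sym01 x y : x \in A0 -> y \in A1 -> B x y = B y x.
Proof. by case: oddsymB => _ _ _ [_ H _ _] _; apply: H. Qed.
Let form_sym10 x y : x \in A1 -> y \in A0 -> B x y = B y x.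
Proof. by case: oddsymB => _ _ _ [_ _ H _] _; apply: H. Qed.
Let formA x y z : B (mul x y) z = B x (mul y z).
Proof. by case: oddsymB => _ _ _ _ [H _]; apply: H. Qed.
Let form_nondeg x : (forall y, B x y = 0) -> x = 0.
Proof. by case: oddsymB => _ _ _ _ [_ H]; apply: H. Qed.

Local Notation mulmDl := (mulmDl mul_bil).
Local Notation mulmDr := (mulmDr mul_bil).
Local Notation mul0m := (mul0m mul_bil).
Local Notation mulm0 := (mulm0 mul_bil).
Local Notation mulm_suml := (mulm_suml mul_bil).
Local Notation mulm_sumr := (mulm_sumr mul_bil).
Local Notation memv_mprodv := (memv_mprodv mul_bil).
Local Notation mprodvS := (mprodvS mul_bil).
Local Notation mprodvDl := (mprodvDl mul_bil).
Local Notation mprodvDr := (mprodvDr mul_bil).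
Local Notation mprodvA := (mprodvA mul_bil mulA).
Local Notation mprodv_eq0 := (mprodv_eq0 mul_bil).
Local Notation formDl := (formDl formZDl).
Local Notation form0l := (form0l formZDl).
Local Notation form0r := (form0r formZDr).
Local Notation memv_orthv := (memv_orthv formZDl formZDr).
Local Notation orth1 U := (orthv B A1 U).
Local Notation orth0 U := (orthv B A0 U).
Local Notation ideal := (ideal_of mul A0).

Lemma dim_even_odd : \dim A0 = \dim A1.
Proof.
apply/eqP; rewrite eqn_leq.
rewrite (dim_pairing_leq formZDl formZDr A10_full form00 form_sym10 form_nondeg).
by rewrite (dim_pairing_leq formZDl formZDr A01_full form11 form_sym01 form_nondeg).
Qed.

Lemma dim_orth1 U : (U <= A0)%VS -> (\dim (orth1 U) + \dim U)%N = \dim A1.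
Proof.
apply: (dim_orthv formZDl formZDr A01_full form11 form_sym01 form_nondeg).
by rewrite dim_even_odd.
Qed.

Lemma dim_orth0 X : (X <= A1)%VS -> (\dim (orth0 X) + \dim X)%N = \dim A0.
Proof.
apply: (dim_orthv formZDl formZDr A10_full form00 form_sym10 form_nondeg).
by rewrite dim_even_odd.
Qed.

Lemma odd_orth_eq0 y : y \in A1 -> (forall x, x \in A0 -> B x y = 0) -> y = 0.
Proof. exact: (form_nondegQ formZDr A01_full form11 form_sym01 form_nondeg). Qed.

Lemma even_orth_eq0 x : x \in A0 -> (forall y, y \in A1 -> B y x = 0) -> x = 0.
Proof. exact: (form_nondegQ formZDr A10_full form00 form_sym10 form_nondeg). Qed.

Lemma ideal_subv U : ideal U -> (U <= A0)%VS.
Proof. by case. Qed.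

Lemma idealMl U a u : ideal U -> a \in A0 -> u \in U -> mul a u \in U.
Proof. by case=> _ sAU _ A0a Uu; apply: (subvP sAU); apply: memv_mprodv. Qed.

Lemma idealMr U a u : ideal U -> a \in A0 -> u \in U -> mul u a \in U.
Proof. by case=> _ _ sUA A0a Uu; apply: (subvP sUA); apply: memv_mprodv. Qed.

Lemma idealP U : (U <= A0)%VS ->
  (forall a u, a \in A0 -> u \in U -> mul a u \in U /\ mul u a \in U) -> ideal U.
Proof.
move=> sUA0 UM; split=> //; apply: mprodv_subv => x y Hx Hy.
  by case: (UM _ _ Hx Hy).
by case: (UM _ _ Hy Hx).
Qed.

Lemma ideal0 : ideal 0%VS.
Proof.
apply: idealP; first exact: sub0v.
by move=> a u _; rewrite memv0 => /eqP ->; rewrite mulm0 mul0m mem0v.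
Qed.

Lemma idealA0 : ideal A0.
Proof. by apply: idealP => // a u A0a A0u; rewrite !mul00. Qed.

Lemma idealD U V : ideal U -> ideal V -> ideal (U + V)%VS.
Proof.
move=> idU idV; apply: idealP; first by rewrite subv_add !ideal_subv.
move=> a x A0a /memv_addP[u Uu [v Vv ->]]; rewrite mulmDl mulmDr.
split; apply: memv_add.
- exact: idealMl idU A0a Uu.
- exact: idealMl idV A0a Vv.
- exact: idealMr idU A0a Uu.
- exact: idealMr idV A0a Vv.
Qed.

Lemma idealI U V : ideal U -> ideal V -> ideal (U :&: V)%VS.
Proof.
move=> idU idV; apply: idealP; first exact: subv_trans (capvSl _ _) (ideal_subv idU).
move=> a x A0a /memv_capP[Ux Vx].
by rewrite !memv_cap (idealMl idU A0a Ux) (idealMl idV A0a Vx) (idealMr idU A0a Ux)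
  (idealMr idV A0a Vx).
Qed.

Lemma ideal_sum (I : finType) (P : pred I) (S : I -> {vspace A}) :
  (forall i, P i -> ideal (S i)) -> ideal (\sum_(i | P i) S i)%VS.
Proof. by move=> idS; apply: big_ind => //; [exact: ideal0 | exact: idealD]. Qed.

Lemma ideal_mprodv U V : ideal U -> ideal V -> ideal (mprodv mul U V).
Proof.
move=> [sUA0 sAUU _] [sVA0 _ sVAV]; apply: idealP.
  apply: mprodv_subv => u v Uu Vv.
  by apply: mul00; [apply: (subvP sUA0) | apply: (subvP sVA0)].
move=> a x A0a UVx; split.
  by apply: (subvP (mprodvS sAUU (subvv V))); rewrite mprodvA memv_mprodv.
by apply: (subvP (mprodvS (subvv U) sVAV)); rewrite -mprodvA memv_mprodv.
Qed.

(* Both products of two ideals lie in their intersection. *)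
Lemma ideal_mprodv_eq0 U V : ideal U -> ideal V -> (U :&: V = 0)%VS ->
  mprodv mul U V = 0%VS.
Proof.
move=> idU idV UV0; apply/mprodv_eq0 => u v Uu Vv.
have A0u := subvP (ideal_subv idU) _ Uu; have A0v := subvP (ideal_subv idV) _ Vv.
by apply/eqP; rewrite -memv0 -UV0 memv_cap (idealMr idU A0v Uu) (idealMl idV A0u Vv).
Qed.

Definition annA0 : {vspace A} := orth0 (mprodv mul A0 A1 + mprodv mul A1 A0)%VS.

Lemma is_Ann_annA0 : is_Ann mul A0 annA0.
Proof.
move=> x; rewrite memv_orthv; split=> [[A0x x_orth] | [A0x x_ann]].
  have orth_l a y : a \in A0 -> y \in A1 -> B (mul a y) x = 0.
    by move=> A0a A1y; apply/x_orth/(subvP (addvSl _ _)); apply: memv_mprodv.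
  have orth_r a y : a \in A0 -> y \in A1 -> B (mul y a) x = 0.
    by move=> A0a A1y; apply/x_orth/(subvP (addvSr _ _)); apply: memv_mprodv.
  split=> // a A0a; split; apply: even_orth_eq0; rewrite ?mul00 // => y A1y.
    by rewrite form_sym10 ?mul00 // formA form_sym01 ?mul01 // orth_l.
  by rewrite -formA orth_r.
have lin a y z : B y x = 0 -> B z x = 0 -> B (a *: y + z) x = 0.
  by rewrite formZDl => -> ->; rewrite mulr0 addr0.
split=> // u /memv_addP[u1 Hu1 [u2 Hu2 ->]]; rewrite formDl.
suff [-> ->] : B u1 x = 0 /\ B u2 x = 0 by rewrite addr0.
split; [move: u1 Hu1 | move: u2 Hu2]; apply: mprodv_ind => //; try exact: form0l.
  move=> a y A0a A1y; rewrite form_sym10 ?mul01 // -formA.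
  by have [-> _] := x_ann a A0a; rewrite form0l.
move=> y a A1y A0a; rewrite formA.
by have [_ ->] := x_ann a A0a; rewrite form0r.
Qed.

Lemma annA0_subv : (annA0 <= A0)%VS.
Proof. exact: orthv_subv. Qed.

Lemma annA0_mul x a : x \in annA0 -> a \in A0 -> mul x a = 0 /\ mul a x = 0.
Proof. by move=> /is_Ann_annA0[_ x_ann] /x_ann. Qed.

Lemma ideal_annA0 : ideal annA0.
Proof.
apply: idealP; first exact: annA0_subv.
by move=> a u A0a /annA0_mul/(_ A0a)[-> ->]; rewrite mem0v.
Qed.

Lemma annA0_mul_odd x w : x \in annA0 -> w \in A1 -> mul x w = 0 /\ mul w x = 0.
Proof.
move=> Nx A1w; have A0x := subvP annA0_subv _ Nx.
split; apply: odd_orth_eq0.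
- exact: mul01.
- by move=> y A0y; rewrite -formA; have [_ ->] := annA0_mul Nx A0y; rewrite form0l.
- exact: mul10.
move=> y A0y; rewrite form_sym01 ?mul10 // formA.
by have [-> _] := annA0_mul Nx A0y; rewrite form0r.
Qed.

Definition minimal_ideal (I : {vspace A}) :=
  [/\ ideal I, I != 0%VS & forall J, ideal J -> (J <= I)%VS -> J = 0%VS \/ J = I].

Lemma exists_minimal_ideal I : ideal I -> I != 0%VS ->
  exists2 J, minimal_ideal J & (J <= I)%VS.
Proof.
move: (leqnn (\dim I)); move: {2}(\dim I) => d.
elim: d I => [|d IHd] I leId idI nzI; first by move: nzI; rewrite -dimv_eq0; lia.
have [[J [idJ sJI nzJ neJI]] | noJ] :=
  classic (exists J, [/\ ideal J, (J <= I)%VS, J != 0%VS & J != I]).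
  have ltJI : (\dim J < \dim I)%N.
    rewrite ltn_neqAle dimvS // andbT; apply: contra neJI => /eqP dimJI.
    by rewrite eqEdim sJI dimJI leqnn.
  have [K minK sKJ] := IHd J (ltnSE (leq_trans ltJI leId)) idJ nzJ.
  by exists K => //; apply: subv_trans sKJ sJI.
exists I => //; split=> // J idJ sJI.
have [-> | nzJ] := eqVneq J 0%VS; first by left.
have [-> | neJI] := eqVneq J I; first by right.
by case: noJ; exists J.
Qed.

Hypothesis semisimple_A0 : semisimple_bimodule A0 mul A0.

(* With a complement [J] of [I] one has [IJ = JI = 0], so [A0 I = I I];
   [A0 I = I A0 = 0] is excluded since it would put [I] inside Ann(A0). *)
Lemma minimal_ideal_idem I : minimal_ideal I -> (I :&: annA0 = 0)%VS ->
  mprodv mul I I = I.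
Proof.
move=> [idI nzI minI] IN0; have [J [idJ IJ_A0 IJ0]] := semisimple_A0 idI.
have [sIA0 sAII sIAI] := idI.
have sII : (mprodv mul I I <= I)%VS.
  exact: subv_trans (mprodvS (subvv I) sIA0) sIAI.
suff: (I <= mprodv mul I I)%VS by move=> sI; apply/eqP; rewrite eqEsubv sII.
have sAI_II : (mprodv mul A0 I <= mprodv mul I I)%VS.
  rewrite -{1}IJ_A0; apply: subv_trans (mprodvDl _ _ _) _.
  by rewrite (ideal_mprodv_eq0 idJ idI) ?addv0 // capvC.
have sIA_II : (mprodv mul I A0 <= mprodv mul I I)%VS.
  rewrite -{1}IJ_A0; apply: subv_trans (mprodvDr _ _ _) _.
  by rewrite (ideal_mprodv_eq0 idI idJ) ?addv0.
have [AI0 | AI] := minI _ (ideal_mprodv idealA0 idI) sAII; last by rewrite -{1}AI.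
have [IA0 | IA] := minI _ (ideal_mprodv idI idealA0) sIAI; last by rewrite -{1}IA.
suff sIN : (I <= annA0)%VS by case/negP: nzI; rewrite -subv0 -IN0 subv_cap subvv.
move/mprodv_eq0: AI0 => AI0; move/mprodv_eq0: IA0 => IA0.
apply/subvP => x Ix; apply/is_Ann_annA0; split=> [|a A0a]; first exact: (subvP sIA0).
by rewrite (IA0 _ _ Ix A0a) (AI0 _ _ A0a Ix).
Qed.

Lemma minimal_ideal_simple I : minimal_ideal I -> (I :&: annA0 = 0)%VS ->
  simple_alg mul I.
Proof.
move=> minI IN0; have II := minimal_ideal_idem minI IN0.
have [idI nzI minJ] := minI; have [J [idJ IJ_A0 IJ0]] := semisimple_A0 idI.
have /mprodv_eq0 JI0 : mprodv mul J I = 0%VS.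
  by apply: ideal_mprodv_eq0; rewrite // capvC.
have /mprodv_eq0 IJ0' := ideal_mprodv_eq0 idI idJ IJ0.
split=> [|K [sKI sIKK sKIK]]; first by rewrite II.
apply: minJ => //; apply: idealP; first exact: subv_trans sKI (ideal_subv idI).
move=> a u; rewrite -IJ_A0 => /memv_addP[i Ii [j Jj ->]] Ku.
have Iu := subvP sKI _ Ku.
rewrite mulmDl mulmDr (JI0 _ _ Jj Iu) (IJ0' _ _ Iu Jj) !addr0.
by split; [apply: (subvP sIKK) | apply: (subvP sKIK)]; apply: memv_mprodv.
Qed.

Lemma minimal_ideal_decomposition C : ideal C -> (C :&: annA0 = 0)%VS ->
  exists n (S : 'I_n -> {vspace A}),
    [/\ forall i, minimal_ideal (S i) /\ (S i :&: annA0 = 0)%VS,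
        C = (\sum_i S i)%VS & \dim C = (\sum_i \dim (S i))%N].
Proof.
move: (leqnn (\dim C)); move: {2}(\dim C) => d.
have empty_sum : exists n (S : 'I_n -> {vspace A}),
    [/\ forall i, minimal_ideal (S i) /\ (S i :&: annA0 = 0)%VS,
        0%VS = (\sum_i S i)%VS & \dim 0%VS = (\sum_i \dim (S i))%N].
  by exists 0%N, (fun=> 0%VS); split=> [[]//||]; rewrite big_ord0 ?dimv0.
elim: d C => [|d IHd] C leCd idC CN0.
  suff -> : C = 0%VS by []; by apply/eqP; rewrite -dimv_eq0; lia.
have [-> // | nzC] := eqVneq C 0%VS.
have [I minI sIC] := exists_minimal_ideal idC nzC.
have IN0 : (I :&: annA0 = 0)%VS.
  by apply/eqP; rewrite -subv0 -CN0; apply: capvS.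
have [idI nzI _] := minI; have [J [idJ IJ_A0 IJ0]] := semisimple_A0 idI.
set C' := (C :&: J)%VS.
have C'N0 : (C' :&: annA0 = 0)%VS.
  by apply/eqP; rewrite -subv0 -CN0; apply: capvS => //; apply: capvSl.
have C_IC' : C = (I + C')%VS.
  apply/eqP; rewrite eqEsubv subv_add sIC capvSl !andbT; apply/subvP => x Cx.
  have := subvP (ideal_subv idC) _ Cx; rewrite -IJ_A0 => /memv_addP[i Ii [j Jj Dx]].
  have C'j : j \in C' by rewrite memv_cap Jj andbT -(addKr i j) -Dx addrC memvB // (subvP sIC).
  by rewrite Dx memv_add.
have dimC : \dim C = (\dim I + \dim C')%N.
  rewrite C_IC' dimv_disjoint_sum //; apply/eqP; rewrite -subv0 -IJ0.
  by apply: capvS => //; apply: capvSr.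
have leC'd : (\dim C' <= d)%N by move: leCd; rewrite dimC -dimv_eq0 in nzI *; lia.
have [n [S [minS C'_sum dimC']]] := IHd C' leC'd (idealI idC idJ) C'N0.
have liftS j : oapp S I (unlift ord0 (lift ord0 j)) = S j by rewrite liftK.
exists n.+1, (fun i => oapp S I (unlift ord0 i)); split.
- by move=> i; case: (unliftP ord0 i) => [j _|_] /=; [exact: minS | split].
- by rewrite big_ord_recl unlift_none (eq_bigr _ (fun j _ => liftS j)) -C'_sum.
rewrite big_ord_recl unlift_none /= dimC dimC'.
by rewrite (eq_bigr _ (fun j _ => congr1 _ (liftS j))).
Qed.

Lemma even_decomposition : exists n (S : 'I_n -> {vspace A}),
  [/\ forall i, minimal_ideal (S i) /\ (S i :&: annA0 = 0)%VS,
      A0 = (\sum_i S i + annA0)%VS & directv (\sum_i S i + annA0)].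
Proof.
have [C [idC NC_A0 NC0]] := semisimple_A0 ideal_annA0.
have [n [S [minS C_sum dimC]]] := minimal_ideal_decomposition idC (etrans (capvC _ _) NC0).
exists n, S; split=> //; first by rewrite -C_sum addvC.
by rewrite directvE /= -C_sum -dimC dimv_disjoint_sum // capvC.
Qed.

Lemma orth1_bimodule U : ideal U -> sub_bimodule A0 mul A1 (orth1 U).
Proof.
move=> idU; have sUA0 := ideal_subv idU; split; first exact: orthv_subv.
  apply: mprodv_subv => a z A0a /memv_orthv[A1z Uz0].
  apply/memv_orthv; split=> [|u Uu]; first exact: mul01.
  by rewrite -formA Uz0 // (idealMr idU A0a Uu).
apply: mprodv_subv => z a /memv_orthv[A1z Uz0] A0a.
apply/memv_orthv; split=> [|u Uu]; first exact: mul10.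
have A0u := subvP sUA0 _ Uu.
by rewrite form_sym01 ?mul10 // formA form_sym10 ?mul00 // Uz0 // (idealMl idU A0a Uu).
Qed.

Lemma ideal_orth1_mul U u z : ideal U -> u \in U -> z \in orth1 U ->
  mul u z = 0 /\ mul z u = 0.
Proof.
move=> idU Uu /memv_orthv[A1z Uz0]; have A0u := subvP (ideal_subv idU) _ Uu.
split; apply: odd_orth_eq0.
- exact: mul01.
- by move=> x A0x; rewrite -formA Uz0 // (idealMl idU A0x Uu).
- exact: mul10.
move=> x A0x.
by rewrite form_sym01 ?mul10 // formA form_sym10 ?mul00 // Uz0 // (idealMr idU A0x Uu).
Qed.

Lemma orth0_orth1 U : (U <= A0)%VS -> orth0 (orth1 U) = U.
Proof.
move=> sUA0; apply/esym/eqP; rewrite eqEdim; apply/andP; split.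
  apply/subvP => u Uu; have A0u := subvP sUA0 _ Uu.
  apply/memv_orthv; split=> // z /memv_orthv[A1z Uz0].
  by rewrite form_sym10 // Uz0.
have := dim_orth0 (orthv_subv B A1 U); have := dim_orth1 sUA0.
by rewrite dim_even_odd; lia.
Qed.

(* An [A0]-sub-bimodule [V] of [orth1 C] yields the ideal [S0 :&: orth0 V]
   of the minimal ideal [S0]; its two possible values force [V] to be
   [orth1 C] or [0]. *)
Lemma orth1_irreducible S0 C : minimal_ideal S0 -> ideal C ->
  (S0 + C)%VS = A0 -> (S0 :&: C = 0)%VS -> irreducible_bimodule A0 mul A1 (orth1 C).
Proof.
move=> [idS0 nzS0 minS0] idC S0C_A0 S0C0.
have sCA0 := ideal_subv idC; have sS0A0 := ideal_subv idS0.
have dimS0C : (\dim S0 + \dim C)%N = \dim A0 by rewrite -dimv_disjoint_sum ?S0C_A0.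
have dim_orthC := dim_orth1 sCA0; rewrite -dim_even_odd in dim_orthC.
split; first exact: orth1_bimodule.
  by rewrite -dimv_eq0; move: nzS0; rewrite -dimv_eq0; lia.
move=> V [sVC sAVV sVAV]; have sVA1 := subv_trans sVC (orthv_subv B A1 C).
have idX : ideal (S0 :&: orth0 V)%VS.
  apply: idealP => [|a x A0a /memv_capP[S0x /memv_orthv[A0x Vx0]]].
    exact: subv_trans (capvSl _ _) sS0A0.
  have S0ax := idealMl idS0 A0a S0x; have S0xa := idealMr idS0 A0a S0x.
  split; rewrite memv_cap ?S0ax ?S0xa /=; apply/memv_orthv; split; rewrite ?mul00 // => v Vv.
    by rewrite -formA Vx0 // (subvP sVAV) ?memv_mprodv.
  have A1v := subvP sVA1 _ Vv.
  by rewrite form_sym10 ?mul00 // formA form_sym01 ?mul01 // Vx0 // (subvP sAVV) ?memv_mprodv.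
have [X0 | XS0] := minS0 _ idX (capvSl _ _).
  right; apply/eqP; rewrite eqEdim sVC /=.
  have := dimv_disjoint_sum X0; have := dim_orth0 sVA1.
  have : (\dim (S0 + orth0 V) <= \dim A0)%N.
    by apply: dimvS; rewrite subv_add sS0A0 orthv_subv.
  lia.
left; apply/eqP; rewrite -dimv_eq0.
have : (A0 <= orth0 V)%VS.
  rewrite -{1}S0C_A0 subv_add -{1}XS0 capvSr /=.
  apply/subvP => c Cc; have A0c := subvP sCA0 _ Cc.
  apply/memv_orthv; split=> // v /(subvP sVC)/memv_orthv[A1v Cv0].
  by rewrite form_sym10 // Cv0.
by move/dimvS; have := dim_orth0 sVA1; lia.
Qed.

(* Both products are nonzero sub-bimodules of the irreducible [orth1 C]:
   if [S0 (orth1 C)] vanished, [S0 = S0 S0] would be orthogonal to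
   [orth1 C], and so would [C], forcing [orth1 C = 0]. *)
Lemma mprodv_orth1 S0 C : minimal_ideal S0 -> ideal C -> mprodv mul S0 S0 = S0 ->
  (S0 + C)%VS = A0 -> (S0 :&: C = 0)%VS ->
  mprodv mul S0 (orth1 C) = orth1 C /\ mprodv mul (orth1 C) S0 = orth1 C.
Proof.
move=> minS0 idC S0S0 S0C_A0 S0C0.
have [[_ sAXX sXAX] nzX irrX] := orth1_irreducible minS0 idC S0C_A0 S0C0.
have [idS0 _ _] := minS0; have [sS0A0 sAS0S0 sS0AS0] := idS0.
have orthS0_false : (forall z, z \in orth1 C -> forall x, x \in S0 -> B x z = 0) -> False.
  move=> S0z0; case/negP: nzX; rewrite -subv0; apply/subvP => z Xz.
  have /memv_orthv[A1z Cz0] := Xz; rewrite memv0; apply/eqP/odd_orth_eq0 => // x.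
  by rewrite -S0C_A0 => /memv_addP[s S0s [c Cc ->]]; rewrite formDl S0z0 // Cz0 // addr0.
have lin z a x y : B x z = 0 -> B y z = 0 -> B (a *: x + y) z = 0.
  by rewrite formZDl => -> ->; rewrite mulr0 addr0.
split.
  have subX : sub_bimodule A0 mul (orth1 C) (mprodv mul S0 (orth1 C)).
    split; first exact: subv_trans (mprodvS sS0A0 (subvv _)) sAXX.
      by rewrite -mprodvA mprodvS.
    by rewrite mprodvA mprodvS.
  case: (irrX _ subX) => // /mprodv_eq0 S0X0; case: orthS0_false => z Xz x.
  rewrite -S0S0; move: x; apply: mprodv_ind => [|a x y|s1 s2 S0s1 S0s2]; rewrite ?form0l //.
    exact: lin.
  by rewrite formA S0X0 ?form0r.
have subX : sub_bimodule A0 mul (orth1 C) (mprodv mul (orth1 C) S0).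
  split; first exact: subv_trans (mprodvS (subvv _) sS0A0) sXAX.
    by rewrite -mprodvA mprodvS.
  by rewrite mprodvA mprodvS.
case: (irrX _ subX) => // /mprodv_eq0 XS00; case: orthS0_false => z Xz x.
have A1z := subvP (orthv_subv B A1 C) _ Xz.
rewrite -S0S0; move: x; apply: mprodv_ind => [|a x y|s1 s2 S0s1 S0s2]; rewrite ?form0l //.
  exact: lin.
have A0s1 := subvP sS0A0 _ S0s1; have A0s2 := subvP sS0A0 _ S0s2.
by rewrite form_sym01 ?mul00 // -formA XS00 ?form0l.
Qed.

Section Blocks.
Variables (n : nat) (S : 'I_n -> {vspace A}).
Hypothesis S_minimal : forall i, minimal_ideal (S i).
Hypothesis S_capN : forall i, (S i :&: annA0 = 0)%VS.
Hypothesis A0_sum : A0 = (\sum_i S i + annA0)%VS.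
Hypothesis A0_direct : directv (\sum_i S i + annA0).

Definition compl_block i : {vspace A} := (\sum_(j | j != i) S j + annA0)%VS.
Definition odd_block i : {vspace A} := orth1 (compl_block i).
Definition odd_null : {vspace A} := orth1 (\sum_i S i).

Let ideal_S i : ideal (S i). Proof. by case: (S_minimal i). Qed.
Let ideal_sumS : ideal (\sum_i S i). Proof. exact: ideal_sum. Qed.
Let S_idem i : mprodv mul (S i) (S i) = S i.
Proof. exact: minimal_ideal_idem. Qed.

Lemma dim_A0_blocks : \dim A0 = (\sum_i \dim (S i) + \dim annA0)%N.
Proof. by move: A0_direct; rewrite directvE /= -A0_sum => /eqP. Qed.

Lemma sumS_cap_annA0 : ((\sum_i S i) :&: annA0 = 0)%VS.
Proof. by move: A0_direct; rewrite directv_addE => /and3P[_ _ /eqP]. Qed.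

Lemma ideal_compl_block i : ideal (compl_block i).
Proof. by apply: idealD; [apply: ideal_sum | apply: ideal_annA0]. Qed.

Lemma S_add_compl_block i : (S i + compl_block i)%VS = A0.
Proof. by rewrite /compl_block addvA A0_sum [in RHS](bigD1 i). Qed.

Lemma S_cap_compl_block i : (S i :&: compl_block i = 0)%VS.
Proof.
have dim_compl : (\dim (compl_block i) <= \sum_(j | j != i) \dim (S j) + \dim annA0)%N.
  have := dimv_sum_cap (\sum_(j | j != i) S j) annA0.
  have : (\dim (\sum_(j | j != i) S j) <= \sum_(j | j != i) \dim (S j))%N.
    exact: dimv_leq_sum.
  rewrite /compl_block; lia.
have dimA0 : \dim A0 = (\dim (S i) + \sum_(j | j != i) \dim (S j) + \dim annA0)%N.
  by rewrite dim_A0_blocks (bigD1 i).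
apply/eqP; rewrite -dimv_eq0.
have := dimv_sum_cap (S i) (compl_block i); rewrite S_add_compl_block; lia.
Qed.

Lemma S_sub_compl_block i j : i != j -> (S i <= compl_block j)%VS.
Proof. by move=> neij; apply: subv_trans (addvSl _ _); apply: (sumv_sup i). Qed.

Lemma odd_block_irreducible i : irreducible_bimodule A0 mul A1 (odd_block i).
Proof.
exact: orth1_irreducible (ideal_compl_block i) (S_add_compl_block i)
  (S_cap_compl_block i).
Qed.

Lemma mprodv_S_odd_block i :
  mprodv mul (S i) (odd_block i) = odd_block i /\
  mprodv mul (odd_block i) (S i) = odd_block i.
Proof.
exact: mprodv_orth1 (ideal_compl_block i) (S_idem i) (S_add_compl_block i)
  (S_cap_compl_block i).
Qed.

Lemma dim_odd_block i : \dim (odd_block i) = \dim (S i).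
Proof.
have := dim_orth1 (ideal_subv (ideal_compl_block i)).
have := dimv_disjoint_sum (S_cap_compl_block i); rewrite S_add_compl_block.
by rewrite dim_even_odd /odd_block; lia.
Qed.

Lemma dim_odd_null : \dim odd_null = \dim annA0.
Proof.
have := dim_orth1 (ideal_subv ideal_sumS).
by rewrite -dim_even_odd {1}A0_sum (dimv_disjoint_sum sumS_cap_annA0) /odd_null; lia.
Qed.

Lemma odd_null_bimodule : sub_bimodule A0 mul A1 odd_null.
Proof. exact: orth1_bimodule. Qed.

Lemma odd_null_mul z a : z \in odd_null -> a \in A0 -> mul a z = 0 /\ mul z a = 0.
Proof.
move=> Nhz; rewrite A0_sum => /memv_addP[c Cc [m Nm ->]].
have [cz0 zc0] := ideal_orth1_mul ideal_sumS Cc Nhz.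
have [mz0 zm0] := annA0_mul_odd Nm (subvP (orthv_subv B A1 _) _ Nhz).
by rewrite mulmDl mulmDr cz0 zc0 mz0 zm0 addr0.
Qed.

Lemma mprodv_A0_odd_null :
  mprodv mul A0 odd_null = 0%VS /\ mprodv mul odd_null A0 = 0%VS.
Proof.
split; apply/mprodv_eq0 => x y Hx Hy.
  by case: (odd_null_mul Hy Hx).
by case: (odd_null_mul Hx Hy).
Qed.

Lemma mprodv_odd_block i j : i != j ->
  mprodv mul (odd_block i) (odd_block j) = 0%VS.
Proof.
move=> neij; rewrite -(mprodv_S_odd_block i).2 mprodvA.
suff -> : mprodv mul (S i) (odd_block j) = 0%VS by apply: mprodv0.
apply/mprodv_eq0 => s z Ss Shz.
exact: (ideal_orth1_mul (ideal_compl_block j) (subvP (S_sub_compl_block neij) _ Ss) Shz).1.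
Qed.

Lemma mprodv_odd_block_sqr i :
  mprodv mul (odd_block i) (odd_block i) = 0%VS \/
  mprodv mul (odd_block i) (odd_block i) = S i.
Proof.
have [_ _ minS] := S_minimal i.
have [[sShA1 sAShSh sShASh] _ _] := odd_block_irreducible i.
have idShSh : ideal (mprodv mul (odd_block i) (odd_block i)).
  apply: idealP => [|a x A0a ShShx].
    by apply: mprodv_subv => y z /(subvP sShA1) A1y /(subvP sShA1); apply: mul11.
  split; [apply: (subvP (mprodvS sAShSh (subvv _))) | apply: (subvP (mprodvS (subvv _) sShASh))].
    by rewrite mprodvA memv_mprodv.
  by rewrite -mprodvA memv_mprodv.
apply: (minS _ idShSh).
rewrite -{1}(mprodv_S_odd_block i).1 mprodvA.
by apply: subv_trans (mprodvS (subvv _) (ideal_subv idShSh)) _; case: (ideal_S i).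
Qed.

Lemma mprodv_odd_null_block i :
  mprodv mul odd_null (odd_block i) = 0%VS /\
  mprodv mul (odd_block i) odd_null = 0%VS.
Proof.
have S_null s z : s \in S i -> z \in odd_null -> mul s z = 0 /\ mul z s = 0.
  by move=> Ss; apply: ideal_orth1_mul ideal_sumS _; apply: (sumv_sup i).
split.
  rewrite -(mprodv_S_odd_block i).1 -mprodvA.
  suff -> : mprodv mul odd_null (S i) = 0%VS by apply: mprod0v.
  by apply/mprodv_eq0 => z s Nhz Ss; have [] := S_null s z Ss Nhz.
rewrite -(mprodv_S_odd_block i).2 mprodvA.
suff -> : mprodv mul (S i) odd_null = 0%VS by apply: mprodv0.
by apply/mprodv_eq0 => s z Ss Nhz; have [] := S_null s z Ss Nhz.
Qed.

Lemma mprodv_odd_null_sqr : (mprodv mul odd_null odd_null <= annA0)%VS.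
Proof.
apply: mprodv_subv => y z Nhy Nhz; apply/is_Ann_annA0.
have A1y := subvP (orthv_subv B A1 _) _ Nhy; have A1z := subvP (orthv_subv B A1 _) _ Nhz.
split=> [|a A0a]; first exact: mul11.
have [_ za0] := odd_null_mul Nhz A0a; have [ay0 _] := odd_null_mul Nhy A0a.
by rewrite mulA za0 mulm0 -mulA ay0 mul0m.
Qed.

(* An element of [A0] orthogonal to all the blocks lies in every
   [compl_block i] and in [\sum_i S i], so it annihilates [A0]; it then lies
   in [(\sum_i S i) :&: Ann(A0) = 0]. *)
Lemma orth0_odd_blocks : orth0 (\sum_i odd_block i + odd_null) = 0%VS.
Proof.
apply/eqP; rewrite -subv0; apply/subvP => x /memv_orthv[A0x x_orth].
rewrite -sumS_cap_annA0.
have x_in_orth0 U : (U <= A0)%VS -> (orth1 U <= \sum_i odd_block i + odd_null)%VS ->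
    x \in U.
  move=> sUA0 sU; rewrite -(orth0_orth1 sUA0); apply/memv_orthv; split=> // z Uz.
  by apply: x_orth; apply: (subvP sU).
have Cx : x \in (\sum_i S i)%VS by apply: x_in_orth0; rewrite ?ideal_subv ?addvSr.
rewrite memv_cap Cx; apply/is_Ann_annA0; split=> // a.
have Cix i : x \in compl_block i.
  apply: x_in_orth0; first exact: ideal_subv (ideal_compl_block i).
  by apply: subv_trans (addvSl _ _); apply: (sumv_sup i).
have S_x i s : s \in S i -> mul x s = 0 /\ mul s x = 0.
  move=> Ss; have [idS idCi] := (ideal_S i, ideal_compl_block i).
  have A0s := subvP (ideal_subv idS) _ Ss.
  split; apply/eqP; rewrite -memv0 -(S_cap_compl_block i) memv_cap.
    by rewrite (idealMl idS A0x Ss) (idealMr idCi A0s (Cix i)).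
  by rewrite (idealMr idS A0x Ss) (idealMl idCi A0s (Cix i)).
rewrite A0_sum => /memv_addP[c /memv_sumP[cs Scs ->] [m Nm ->]].
have [xm0 mx0] := annA0_mul Nm A0x.
rewrite mulmDl mulmDr mulm_suml mulm_sumr xm0 mx0 !addr0.
by split; apply: big1 => i _; have [] := S_x i (cs i) (Scs i isT).
Qed.

Lemma odd_decomposition :
  A1 = (\sum_i odd_block i + odd_null)%VS /\ directv (\sum_i odd_block i + odd_null).
Proof.
have sTA1 : (\sum_i odd_block i + odd_null <= A1)%VS.
  by rewrite subv_add orthv_subv andbT; apply/subv_sumP => i _; apply: orthv_subv.
have dimT := dim_orth0 sTA1; rewrite orth0_odd_blocks dimv0 add0n dim_even_odd in dimT.
have A1_T : A1 = (\sum_i odd_block i + odd_null)%VS.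
  by apply/esym/eqP; rewrite eqEdim sTA1 dimT leqnn.
split=> //; rewrite directvE /= -A1_T -dim_even_odd dim_A0_blocks dim_odd_null.
by rewrite (eq_bigr _ (fun i _ => dim_odd_block i)).
Qed.

End Blocks.

End OddSymmetricSuperalgebra.

Unset Implicit Arguments.
Local Open Scope vspace_scope.

Theorem mainTheorem12 (F : closedFieldType) (A : vectType F)
    (A0 A1 : {vspace A}) (mul : A -> A -> A) (B : A -> A -> F) :
  [pchar F] =i pred0 ->
  superalgebra A0 A1 mul ->
  odd_symmetric A0 A1 mul B ->
  semisimple_bimodule A0 mul A0 ->
  exists (n : nat) (S Sh : 'I_n -> {vspace A}) (N Nh : {vspace A}),
    [/\ (forall i, ideal_of mul A0 (S i) /\ simple_alg mul (S i)),
        is_Ann mul A0 N,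
        (forall i, irreducible_bimodule A0 mul A1 (Sh i)),
        sub_bimodule A0 mul A1 Nh /\
          mprodv mul A0 Nh = 0%VS /\ mprodv mul Nh A0 = 0%VS &
        [/\ (A0 = (\sum_i S i + N)%VS /\ directv (\sum_i S i + N)) /\
            (A1 = (\sum_i Sh i + Nh)%VS /\ directv (\sum_i Sh i + Nh)),
            (forall i j, i != j ->
               mprodv mul (Sh i) (Sh j) = 0%VS /\ mprodv mul (Sh j) (Sh i) = 0%VS),
            (forall i, mprodv mul (Sh i) (Sh i) = 0%VS \/
                       mprodv mul (Sh i) (Sh i) = S i),
            (forall i, mprodv mul Nh (Sh i) = 0%VS /\ mprodv mul (Sh i) Nh = 0%VS) &
            (mprodv mul Nh Nh <= N)%VS]].
Proof.
move=> _ sup sym ss.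
have [n [S [S_props A0_sum A0_direct]]] := even_decomposition sup sym ss.
have S_minimal i : minimal_ideal A0 mul (S i) by case: (S_props i).
have S_capN i : S i :&: annA0 A0 A1 mul B = 0 by case: (S_props i).
exists n, S, (odd_block A0 A1 mul B S), (annA0 A0 A1 mul B), (odd_null A1 B S).
split.
- move=> i; split; first by case: (S_minimal i).
  exact (minimal_ideal_simple sup sym ss (S_minimal i) (S_capN i)).
- exact (is_Ann_annA0 sup sym).
- exact (odd_block_irreducible sup sym S_minimal A0_sum A0_direct).
- split; first exact (odd_null_bimodule sup sym S_minimal).
  exact (mprodv_A0_odd_null sup sym S_minimal A0_sum).
split.
- by split; [split | exact (odd_decomposition sup sym S_minimal A0_sum A0_direct)].
- move=> i j neij.
  have Sh0 := mprodv_odd_block sup sym ss S_minimal S_capN A0_sum A0_direct.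
  by rewrite !Sh0 // eq_sym.
- exact (mprodv_odd_block_sqr sup sym ss S_minimal S_capN A0_sum A0_direct).
- exact (mprodv_odd_null_block sup sym ss S_minimal S_capN A0_sum A0_direct).
exact (mprodv_odd_null_sqr sup sym S_minimal A0_sum).
Qed.
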